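(* Let $r\geq 1$, $k\geq 2$, $G=(N^k,\Theta)$ a downward directed lattice graph, $F$ a partial selection function, $D\subset N^k$ finite, and $\rho_D:D\to N$ with $\rho_D(x)\geq\min(x)$ for all $x\in D$. Then for all $z\in D$: if $\Phi^D_z\neq\emptyset$ then $h^\rho_D(z)=\hat{s}_D(z)<\max(z)$; if $\Phi^D_z=\emptyset$ then $h^\rho_D(z)=\rho_D(z)$ and $\hat{s}_D(z)=\max(z)$. Moreover, for any $E\subset N$ of cardinality $p\geq 2$ with $E^k\subseteq D$, $\hat{s}_D$ is regressively regular over $E$ if and only if $h^\rho_D$ is regressively regular over $E$.
   Context: $N$ denotes the nonnegative integers. For $z\in N^k$, $\max(z)$, $\min(z)$ are the max and min coordinates. A directed graph $G=(N^k,\Theta)$ is a downward directed lattice graph if every edge $(x,y)\in\Theta$ satisfies $\max(x)>\max(y)$. For finite $D$, $\Theta_D=\{(x,y)\in\Theta:x,y\in D\}$ and $G^z_D=\{x:(z,x)\in\Theta_D\}$. A partial selection function is a partial function $F: N^k\times(N^k\times N)^r\rightarrow N$ such that whenever $F(x,((y_1,n_1),\ldots,(y_r,n_r)))$ is defined it equals some $n_i$. $\hat{s}_D$: defined recursively on $\max(z)$: $\Phi^D_z$ is the set of defined values $F[z,(y_1,n_1),\ldots,(y_r,n_r)]$ over $y_1,\ldots,y_r\in G^z_D$, where $n_i=\hat{s}_D(y_i)$ if $\Phi^D_{y_i}\neq\emptyset$ and $n_i=\min(y_i)$ otherwise; $\hat{s}_D(z)=\max(z)$ if $\Phi^D_z=\emptyset$,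 else $\hat{s}_D(z)=\min\Phi^D_z$. $h^\rho_D$: defined by the same recursion, with $\Phi^D_z$ the set of defined values $F[z,(y_1,n_1),\ldots,(y_r,n_r)]$, $y_i\in G^z_D$, where $n_i=h^\rho_D(y_i)$ if $\Phi^D_{y_i}\neq\emptyset$ and $n_i=\min(y_i)$ otherwise; $h^\rho_D(z)=\rho_D(z)$ if $\Phi^D_z=\emptyset$, else $h^\rho_D(z)=\min\Phi^D_z$. Order types: $x=(n_i)$ and $y=(m_i)$ are order equivalent if $\{(i,j):n_i<n_j\}=\{(i,j):m_i<m_j\}$ and $\{(i,j):n_i=n_j\}=\{(i,j):m_i=m_j\}$. $f:D\to N$ is regressively regular over $E$ ($E^k\subseteq D$) if for each order type class in $E^k$, either $f(x)=f(y)<\min(E)$ for all $x,y$ in the class, or $f(x)\geq\min(x)$ for all $x$ in the class. *)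

From mathcomp Require Import all_boot.
Set Implicit Arguments. Unset Strict Implicit. Unset Printing Implicit Defensive.

Section Defs.
Variable k : nat.
Notation pt := (k.-tuple nat).

Definition maxt (z : pt) : nat := \max_(i <- z) i.
Definition mint (z : pt) : nat := foldr minn (head 0 z) z.

Definition seqmin (s : seq nat) : nat := foldr minn (head 0 s) s.

Definition downward_directed (Theta : rel pt) : Prop :=
  forall x y, Theta x y -> maxt y < maxt x.

Definition partial_selection (r : nat) (F : pt -> seq (pt * nat) -> option nat) :=
  forall x l n, size l = r -> F x l = Some n -> n \in unzip2 l.

Fixpoint seqs {A : Type} (r : nat) (l : seq A) : seq (seq A) :=
  match r with
  | 0 => [:: [::]]
  | r'.+1 => [seq y :: s | y <- l, s <- seqs r' l]
  end.

Variables (r : nat) (Theta : rel pt) (F : pt -> seq (pt * nat) -> option nat)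
          (D : seq pt).

Definition GD (z : pt) : seq pt := [seq y <- D | (z \in D) && Theta z y].

(* the set of defined values F[z,(y_1,c y_1),...,(y_r,c y_r)], y_i in G^z_D *)
Definition Phi_with (c : pt -> nat) (z : pt) : seq nat :=
  pmap (fun ys => F z [seq (y, c y) | y <- ys]) (seqs r (GD z)).

(* fuel-indexed recursion: returns (Phi_z, h(z)); with default rho.
   Since the graph is downward directed, fuel > max(z) suffices. *)
Fixpoint hrec (rho : pt -> nat) (fuel : nat) (z : pt) : seq nat * nat :=
  match fuel with
  | 0 => ([::], rho z)
  | f.+1 =>
      let c y := let p := hrec rho f y in
                 if p.1 is [::] then mint y else p.2 in
      let Ph := Phi_with c z in
      (Ph, if Ph is [::] then rho z else seqmin Ph)
  end.

Definition PhiD (rho : pt -> nat) (z : pt) : seq nat := (hrec rho (maxt z).+1 z).1.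
Definition hD (rho : pt -> nat) (z : pt) : nat := (hrec rho (maxt z).+1 z).2.

Definition shatD (z : pt) : nat := hD maxt z.
Definition PhiS (z : pt) : seq nat := PhiD maxt z.

End Defs.

Definition order_equiv (k : nat) (x y : k.-tuple nat) : Prop :=
  forall i j : 'I_k,
    (tnth x i < tnth x j) = (tnth y i < tnth y j) /\
    (tnth x i == tnth x j) = (tnth y i == tnth y j).

Definition inEk (k : nat) (E : seq nat) (x : k.-tuple nat) : bool := all (mem E) x.

Definition regressively_regular (k : nat) (f : k.-tuple nat -> nat) (E : seq nat) : Prop :=
  forall x, inEk E x ->
    (forall y, inEk E y -> order_equiv x y -> f y = f x /\ f x < seqmin E)
    \/ (forall y, inEk E y -> order_equiv x y -> mint y <= f y).

From mathcomp Require Import all_boot.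

Set Implicit Arguments.
Unset Strict Implicit.

(* The set Phi_z does not depend on the default value of the recursion: a
   default is only used at vertices whose own Phi is empty, and there the
   argument passed to F is min(y) in both recursions.  Hence h and hat s both
   equal min Phi_z when Phi_z is nonempty, and since F selects one of the
   values of strictly lower vertices, min Phi_z < max z.  When Phi_z is empty
   both functions are >= min z, so on E^k the two functions either coincide or
   are both non-regressive, which is all regressive regularity can see. *)

Lemma mem_seqs (A : eqType) (r : nat) (l ys : seq A) :
  ys \in seqs r l -> size ys = r /\ all (mem l) ys.
Proof.
elim: r ys => [|r IH] ys /=; first by rewrite inE => /eqP ->.
case/allpairsPdep => y [s [l_y /IH[<- l_s] ->]].
by rewrite /= l_y l_s.
Qed.

Lemma seqmin_le (s : seq nat) e : e \in s -> seqmin s <= e.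
Proof.
rewrite /seqmin; elim: s (head 0 s) => [|a s IH] // x.
rewrite inE => /orP[/eqP ->|s_e]; first exact: geq_minl.
exact: leq_trans (geq_minr _ _) (IH x s_e).
Qed.

Lemma foldr_minn_mem (x : nat) s : foldr minn x s \in x :: s.
Proof.
elim: s => [|a s IH] /=; first exact: mem_head.
rewrite /minn; case: ifP => _; first by rewrite !inE eqxx orbT.
by move: IH; rewrite !inE => /orP[->|->]; rewrite ?orbT.
Qed.

Lemma seqmin_mem (s : seq nat) : s != [::] -> seqmin s \in s.
Proof.
case: s => // a s _; change (foldr minn a (a :: s) \in a :: s).
have := foldr_minn_mem a (a :: s).
by rewrite inE => /orP[/eqP ->|//]; apply: mem_head.
Qed.

Section Tuples.
Variable k : nat.
Implicit Types x y : k.-tuple nat.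

Lemma mint_mem x : 0 < k -> mint x \in (x : seq nat).
Proof. by move=> k_gt0; apply: seqmin_mem; rewrite -size_eq0 size_tuple -lt0n. Qed.

Lemma leq_maxt x e : e \in (x : seq nat) -> e <= maxt x.
Proof. by move=> x_e; apply: (@leq_bigmax_seq _ x xpredT id). Qed.

Lemma mint_le_maxt x : mint x <= maxt x.
Proof. by case: x => [[|a s] sz] //; exact/leq_maxt/(@seqmin_mem (a :: s)). Qed.

Lemma seqmin_le_mint (E : seq nat) x : 0 < k -> inEk E x -> seqmin E <= mint x.
Proof. by move=> k_gt0 /allP E_x; apply/seqmin_le/E_x/mint_mem. Qed.

(* Regressive regularity only distinguishes values below min x. *)
Lemma regressively_regular_congr (E : seq nat) (f g : k.-tuple nat -> nat) :
  0 < k ->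
  (forall x, inEk E x -> f x = g x \/ mint x <= f x /\ mint x <= g x) ->
  regressively_regular f E <-> regressively_regular g E.
Proof.
move=> k_gt0.
suff transfer f' g' :
    (forall x, inEk E x -> f' x = g' x \/ mint x <= f' x /\ mint x <= g' x) ->
    regressively_regular f' E -> regressively_regular g' E.
  by move=> fg; split; apply: transfer => // x /fg[->|[]]; [left|right].
move=> fg reg_f x E_x; case: (reg_f x E_x) => [const|nonreg]; [left|right] => y E_y xy.
- have f_eq_g z : inEk E z -> f' z < seqmin E -> f' z = g' z.
    move=> E_z lt_fz; case: (fg z E_z) => [//|[le_fz _]].
    by move: (leq_trans (seqmin_le_mint k_gt0 E_z) le_fz); rewrite leqNgt lt_fz.
  have [fy_fx fx_lt] := const y E_y xy.
  rewrite -!f_eq_g //; by rewrite fy_fx.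
- by case: (fg y E_y) => [<-|[]//]; apply: nonreg.
Qed.

End Tuples.

Section Recursion.
Variables (k r : nat) (Theta : rel (k.-tuple nat))
    (F : k.-tuple nat -> seq (k.-tuple nat * nat) -> option nat)
    (D : seq (k.-tuple nat)).

Local Notation hrec := (hrec r Theta F D).
Local Notation Phi_with := (Phi_with r Theta F D).
Local Notation PhiS := (PhiS r Theta F D).
Local Notation hD := (hD r Theta F D).

Lemma hrec_snd rho f z :
  (hrec rho f z).2 = if (hrec rho f z).1 is [::] then rho z else seqmin (hrec rho f z).1.
Proof. by case: f. Qed.

Lemma eq_Phi_with c1 c2 z : c1 =1 c2 -> Phi_with c1 z = Phi_with c2 z.
Proof.
move=> c12; apply: eq_pmap => ys; congr (F z _).
by apply: eq_map => y; rewrite c12.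
Qed.

Lemma hrec_fst_default rho1 rho2 f z : (hrec rho1 f z).1 = (hrec rho2 f z).1.
Proof.
elim: f z => [|f IH] z //=; apply: eq_Phi_with => y.
by rewrite !hrec_snd IH; case: (hrec rho2 f y).1.
Qed.

Lemma hrec_fst_lt rho f z n :
  downward_directed Theta -> partial_selection r F ->
  n \in (hrec rho f z).1 -> n < maxt z.
Proof.
move=> down sel; elim: f z n => [|f IH] z n //=.
rewrite mem_pmap => /mapP[ys /mem_seqs[size_ys G_ys] /esym Fz].
have := sel _ _ _ (etrans (size_map _ _) size_ys) Fz.
rewrite /unzip2 -map_comp => /mapP[y ys_y ->].
have := allP G_ys y ys_y; rewrite /= mem_filter => /andP[/andP[_ /down lt_yz] _].
case Phi_y: (hrec rho f y).1 => [|m s] /=.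
  exact: leq_ltn_trans (mint_le_maxt y) lt_yz.
rewrite hrec_snd Phi_y -Phi_y; apply: ltn_trans lt_yz.
by apply/IH/seqmin_mem; rewrite Phi_y.
Qed.

Lemma hDE rho z : hD rho z = if PhiS z is [::] then rho z else seqmin (PhiS z).
Proof. by rewrite /hD hrec_snd /PhiS /PhiD (hrec_fst_default rho (@maxt k)). Qed.

Lemma shatDE z : shatD r Theta F D z = if PhiS z is [::] then maxt z else seqmin (PhiS z).
Proof. exact: hDE. Qed.

Lemma PhiS_lt z n :
  downward_directed Theta -> partial_selection r F -> n \in PhiS z -> n < maxt z.
Proof. exact: hrec_fst_lt. Qed.

End Recursion.

Theorem mainTheorem2 (r k : nat) (Theta : rel (k.-tuple nat))
    (F : k.-tuple nat -> seq (k.-tuple nat * nat) -> option nat)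
    (D : seq (k.-tuple nat)) (rho : k.-tuple nat -> nat) :
  1 <= r -> 2 <= k ->
  downward_directed Theta ->
  partial_selection r F ->
  (forall x, x \in D -> mint x <= rho x) ->
  (forall z, z \in D ->
     (PhiS r Theta F D z != [::] ->
        hD r Theta F D rho z = shatD r Theta F D z /\
        shatD r Theta F D z < maxt z) /\
     (PhiS r Theta F D z = [::] ->
        hD r Theta F D rho z = rho z /\ shatD r Theta F D z = maxt z)) /\
  (forall E : seq nat, uniq E -> 2 <= size E ->
     (forall x : k.-tuple nat, inEk E x -> x \in D) ->
     (regressively_regular (shatD r Theta F D) E <->
      regressively_regular (hD r Theta F D rho) E)).
Proof.
move=> _ k_ge2 down sel rho_ge.
split=> [z _|E _ _ ED].
  rewrite hDE shatDE; split=> [|-> //].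
  case Phi_z: (PhiS r Theta F D z) => [|n s] // _; split=> //.
  by apply: (PhiS_lt down sel); rewrite -Phi_z; apply: seqmin_mem; rewrite Phi_z.
apply: regressively_regular_congr => [|x E_x]; first exact: ltn_trans k_ge2.
rewrite hDE shatDE; case: (PhiS r Theta F D x) => [|n s]; last by left.
by right; split; [apply: mint_le_maxt | apply/rho_ge/ED].
Qed.
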